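(* Let $\omega$ be a normalized 3-cocycle on a finite group $G$ with values in $\mathbb{K}^\times$ (i.e. $\omega(x,y,z)\omega(w,xy,z)\omega(w,x,y)=\omega(w,x,yz)\omega(wx,y,z)$ and $\omega(x,y,z)=1$ if one of $x,y,z$ is $e$). For $g,h,x,y\in G$ define $$\gamma_{g,h}(x)=\frac{\omega(g,h,x)\,\omega(ghxh^{-1}g^{-1},g,h)}{\omega(g,hxh^{-1},h)},\qquad \mu_g(x,y)=\frac{\omega(gxg^{-1},g,y)}{\omega(gxg^{-1},gyg^{-1},g)\,\omega(g,x,y)}.$$ Then $(\omega,\gamma,\mu,1)$ is a quasi-abelian 3-cocycle on the crossed module $(G,G,\mathrm{id}_G)$, where $G$ acts on itself by conjugation ${}^gx=gxg^{-1}$.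
   Context: $\mathbb{K}$ is an algebraically closed field of characteristic $0$. For a finite crossed module $(G,X,\partial)$ ($G$ acting on $X$ by automorphisms $(g,x)\mapsto{}^gx$, $\partial:X\to G$ a homomorphism with ${}^{\partial(x)}x'=xx'x^{-1}$, $\partial({}^gx)=g\partial(x)g^{-1}$), a quasi-abelian 3-cocycle is a quadruple $(\omega,\gamma,\mu,c)$ of functions $\omega:X^3\to\mathbb{K}^\times$, $(g,h,x)\mapsto\gamma_{g,h}(x)$ on $G\times G\times X$, $(g,x,y)\mapsto\mu_g(x,y)$ on $G\times X\times X$, $c:X^2\to\mathbb{K}^\times$, such that for all $g,h,k\in G$, $w,x,y,z\in X$: (a) $\omega(x,y,z)\omega(w,xy,z)\omega(w,x,y)=\omega(w,x,yz)\omega(wx,y,z)$; (b) $\gamma_{h,k}(x)\gamma_{g,hk}(x)=\gamma_{gh,k}(x)\gamma_{g,h}({}^kx)$; (c) $\frac{\mu_g(y,z)\mu_g(x,yz)}{\mu_g(xy,z)\mu_g(x,y)}=\frac{\omega({}^gx,{}^gy,{}^gz)}{\omega(x,y,z)}$; (d) $\frac{\gamma_{g,h}(x)\gamma_{g,h}(y)}{\gamma_{g,h}(xy)}=\frac{\mu_g({}^hx,{}^hy)\mu_h(x,y)}{\mu_{gh}(x,y)}$; (e) $\frac{c({}^gx,{}^gy)}{c(x,y)}=\frac{\mu_g(xyx^{-1},x)}{\mu_g(x,y)}\cdot\frac{\gamma_{g\partial(x)g^{-1},g}(y)}{\gamma_{g,\partial(x)}(y)}$; (f) $c(xy,z)=\frac{\omega(x,y,z)\,\omega((xy)z(xy)^{-1},x,y)}{\omega(x,yzy^{-1},y)\,\gamma_{\partial(x),\partial(y)}(z)}\,c(x,yzy^{-1})\,c(y,z)$;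 (g) $c(x,yz)=\frac{\omega(xyx^{-1},x,z)}{\omega(x,y,z)\,\omega(xyx^{-1},xzx^{-1},x)\,\mu_{\partial(x)}(y,z)}\,c(x,y)\,c(x,z)$. Here $1$ denotes the constant function $c\equiv1$. *)

From mathcomp Require Import all_boot all_algebra all_fingroup.
Set Implicit Arguments. Unset Strict Implicit. Unset Printing Implicit Defensive.
Import GRing.Theory.
Local Open Scope ring_scope.

Definition is_crossed_module (G X : finGroupType)
  (act : G -> X -> X) (del : X -> G) : Prop :=
  (forall x, act 1%g x = x) /\
      (forall g h x, act (g * h)%g x = act g (act h x)) /\
      (forall g x y, act g (x * y)%g = (act g x * act g y)%g) /\
      (forall x y, del (x * y)%g = (del x * del y)%g) /\
      (forall x x', act (del x) x' = (x * x' * x^-1)%g) /\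
      (forall g x, del (act g x) = (g * del x * g^-1)%g).

Definition quasi_abelian_3cocycle (K : fieldType) (G X : finGroupType)
  (act : G -> X -> X) (del : X -> G)
  (om : X -> X -> X -> K) (ga : G -> G -> X -> K)
  (mu : G -> X -> X -> K) (c : X -> X -> K) : Prop :=
  ((forall x y z, om x y z != 0) /\
      (forall g h x, ga g h x != 0) /\
      (forall g x y, mu g x y != 0) /\
      (forall x y, c x y != 0) /\
  (forall w x y z : X,
     om x y z * om w (x * y)%g z * om w x y
     = om w x (y * z)%g * om (w * x)%g y z) /\
  (forall (g h k : G) (x : X),
     ga h k x * ga g (h * k)%g x = ga (g * h)%g k x * ga g h (act k x)) /\
  (forall (g : G) (x y z : X),
     mu g y z * mu g x (y * z)%g / (mu g (x * y)%g z * mu g x y)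
     = om (act g x) (act g y) (act g z) / om x y z) /\
  (forall (g h : G) (x y : X),
     ga g h x * ga g h y / ga g h (x * y)%g
     = mu g (act h x) (act h y) * mu h x y / mu (g * h)%g x y) /\
  (forall (g : G) (x y : X),
     c (act g x) (act g y) / c x y
     = mu g (x * y * x^-1)%g x / mu g x y
       * (ga (g * del x * g^-1)%g g y / ga g (del x) y)) /\
  (forall x y z : X,
     c (x * y)%g z
     = om x y z * om (x * y * z * (x * y)^-1)%g x y
       / (om x (y * z * y^-1)%g y * ga (del x) (del y) z)
       * c x (y * z * y^-1)%g * c y z) /\
  (forall x y z : X,
     c x (y * z)%g
     = om (x * y * x^-1)%g x z
       / (om x y z * om (x * y * x^-1)%g (x * z * x^-1)%g x * mu (del x) y z)
       * c x y * c x z)).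

Definition normalized_3cocycle (K : fieldType) (G : finGroupType)
  (om : G -> G -> G -> K) : Prop :=
  [/\ (forall x y z, om x y z != 0),
      (forall w x y z : G,
         om x y z * om w (x * y)%g z * om w x y
         = om w x (y * z)%g * om (w * x)%g y z) &
      (forall x y z : G, x = 1%g \/ y = 1%g \/ z = 1%g -> om x y z = 1)].

Definition conj_act (G : finGroupType) (g x : G) : G := (g * x * g^-1)%g.

Definition gamma_of (K : fieldType) (G : finGroupType) (om : G -> G -> G -> K)
  (g h x : G) : K :=
  om g h x * om (g * h * x * h^-1 * g^-1)%g g h / om g (h * x * h^-1)%g h.

Definition mu_of (K : fieldType) (G : finGroupType) (om : G -> G -> G -> K)
  (g x y : G) : K :=
  om (g * x * g^-1)%g g y
  / (om (g * x * g^-1)%g (g * y * g^-1)%g g * om g x y).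

(* Write [a|b|c] for om a b c.  Every identity to check is an equation between
   monomials in the values of om; its two sides differ by a product of
   coboundary values (d om)(w,x,y,z) = [x|y|z][w|xy|z][w|x|y] / ([w|x|yz][wx|y|z]),
   each of which is 1 by the cocycle condition.  The only work is to find which
   coboundary values: four for the cocycle identity of gamma, four for the
   coboundary of mu_g and six for the coboundary of gamma_(g,h); the remaining
   axioms hold by the definitions of gamma and mu and normalization. *)

From mathcomp Require Import all_boot all_algebra all_fingroup.
From mathcomp Require Import ring.

Set Implicit Arguments.
Unset Strict Implicit.
Unset Printing Implicit Defensive.

Import GRing.Theory.
Local Open Scope ring_scope.

Ltac group_norm := rewrite /conj_act ?invMg ?invgK ?invg1 ?mulgA;
  rewrite ?(mulgK, mulgKV, mulgV, mulVg, mul1g, mulg1).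

Lemma conj_act_crossed_module (G : finGroupType) :
  is_crossed_module (@conj_act G) id.
Proof. by do !split=> *; group_norm. Qed.

Lemma eq_of_ratio_eq1 (K : fieldType) (p a b : K) :
  b != 0 -> a / b = p -> p = 1 -> a = b.
Proof. by move=> b_neq0 abp p1; rewrite -(divfK b_neq0 a) abp p1 mul1r. Qed.

Definition cocycle_defect (K : fieldType) (G : finGroupType)
  (om : G -> G -> G -> K) (w x y z : G) : K :=
  om x y z * om w (x * y)%g z * om w x y / (om w x (y * z)%g * om (w * x)%g y z).

Section NormalizedCocycle.

Variables (K : fieldType) (G : finGroupType) (om : G -> G -> G -> K).
Hypothesis om_neq0 : forall x y z, om x y z != 0.
Hypothesis om_cocycle : forall w x y z : G,
  om x y z * om w (x * y)%g z * om w x y = om w x (y * z)%g * om (w * x)%g y z.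
Hypothesis om_normalized :
  forall x y z : G, x = 1%g \/ y = 1%g \/ z = 1%g -> om x y z = 1.

Let om1x y z : om 1%g y z = 1. Proof. by apply: om_normalized; left. Qed.
Let omx1 x z : om x 1%g z = 1. Proof. by apply: om_normalized; right; left. Qed.
Let omxy1 x y : om x y 1%g = 1. Proof. by apply: om_normalized; right; right. Qed.

Lemma cocycle_defect_eq1 w x y z : cocycle_defect om w x y z = 1.
Proof. by rewrite /cocycle_defect om_cocycle divff // mulf_neq0. Qed.

Lemma gamma_of_neq0 g h x : gamma_of om g h x != 0.
Proof. by rewrite /gamma_of ?(mulf_neq0, invr_neq0, om_neq0). Qed.

Lemma mu_of_neq0 g x y : mu_of om g x y != 0.
Proof. by rewrite /mu_of ?(mulf_neq0, invr_neq0, om_neq0). Qed.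

Ltac om_field := rewrite /cocycle_defect /gamma_of /mu_of; group_norm;
  rewrite ?om1x ?omx1 ?omxy1; by field; rewrite ?om_neq0 ?oner_neq0.

(* Reduces [a = b] to the rational identity [a / b = p] in the values of om,
   and to [p = 1], for a product [p] of coboundary values. *)
Ltac by_coboundary p :=
  apply: (@eq_of_ratio_eq1 _ p);
  [ by rewrite ?(mulf_neq0, invr_neq0, gamma_of_neq0, mu_of_neq0)
  | om_field
  | by rewrite !cocycle_defect_eq1 ?invr1 ?mulr1 ].

Lemma gamma_of_cocycle g h k x :
  gamma_of om h k x * gamma_of om g (h * k)%g x
  = gamma_of om (g * h)%g k x * gamma_of om g h (conj_act k x).
Proof.
by_coboundary (cocycle_defect om g h k x
  / cocycle_defect om (conj_act (g * h * k) x) g h k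
  * cocycle_defect om g (conj_act (h * k) x) h k
  / cocycle_defect om g h (conj_act k x) k).
Qed.

Lemma mu_of_coboundary g x y z :
  mu_of om g y z * mu_of om g x (y * z)%g / (mu_of om g (x * y)%g z * mu_of om g x y)
  = om (conj_act g x) (conj_act g y) (conj_act g z) / om x y z.
Proof.
by_coboundary (cocycle_defect om g x y z
  / cocycle_defect om (conj_act g x) (conj_act g y) (conj_act g z) g
  * cocycle_defect om (conj_act g x) (conj_act g y) g z
  / cocycle_defect om (conj_act g x) g y z).
Qed.

Lemma gamma_of_coboundary g h x y :
  gamma_of om g h x * gamma_of om g h y / gamma_of om g h (x * y)%g
  = mu_of om g (conj_act h x) (conj_act h y) * mu_of om h x y
    / mu_of om (g * h)%g x y.
Proof.
by_coboundary (cocycle_defect om g h x y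
  * cocycle_defect om (conj_act (g * h) x) (conj_act (g * h) y) g h
  * cocycle_defect om (conj_act (g * h) x) g h y
  / cocycle_defect om (conj_act (g * h) x) g (conj_act h y) h
  / cocycle_defect om g (conj_act h x) h y
  * cocycle_defect om g (conj_act h x) (conj_act h y) h).
Qed.

Lemma mu_of_gamma_of_conj g x y :
  mu_of om g (x * y * x^-1)%g x / mu_of om g x y
  * (gamma_of om (g * x * g^-1)%g g y / gamma_of om g x y) = 1.
Proof. by om_field. Qed.

Lemma gamma_of_hexagon x y z :
  om x y z * om (x * y * z * (x * y)^-1)%g x y
  / (om x (y * z * y^-1)%g y * gamma_of om x y z) = 1.
Proof. by om_field. Qed.

Lemma mu_of_hexagon x y z :
  om (x * y * x^-1)%g x z
  / (om x y z * om (x * y * x^-1)%g (x * z * x^-1)%g x * mu_of om x y z) = 1.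
Proof. by om_field. Qed.

End NormalizedCocycle.

Theorem lemma6p3 (K : closedFieldType) (HK : [pchar K] =i pred0)
  (G : finGroupType) (om : G -> G -> G -> K) :
  normalized_3cocycle om ->
  is_crossed_module (@conj_act G) id /\
  quasi_abelian_3cocycle (@conj_act G) id om (gamma_of om) (mu_of om)
    (fun _ _ => 1).
Proof.
case=> om_neq0 om_cocycle om_normalized.
split; first exact: conj_act_crossed_module.
split; first exact: om_neq0.
split; first exact: gamma_of_neq0.
split; first exact: mu_of_neq0.
split; first by move=> *; apply: oner_neq0.
split; first exact: om_cocycle.
split; first exact: gamma_of_cocycle.
split; first exact: mu_of_coboundary.
split; first exact: gamma_of_coboundary.
split; first by move=> g x y; rewrite divr1 mu_of_gamma_of_conj.
split; first by move=> x y z /=; rewrite !mulr1 gamma_of_hexagon.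
by move=> x y z /=; rewrite !mulr1 mu_of_hexagon.
Qed.
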